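(* Let $x\in\beta\mathbb{N}$ with $x\in\overline{L_i}$ for some $i\ge1$. Then $x$ is irreducible in $\beta\mathbb{N}$ or $x$ is a product of irreducible elements of $\beta\mathbb{N}$.
   Context: $\mathbb{N}=\{1,2,3,\dots\}$; $\beta\mathbb{N}$ is the set of ultrafilters on $\mathbb{N}$ (Stone–Čech compactification of discrete $\mathbb{N}$, naturals identified with principal ultrafilters), with multiplication: $A\in xy$ iff $\{n\in\mathbb{N}:A/n\in y\}\in x$, where $A/n=\{m:mn\in A\}$. For $A\subseteq\mathbb{N}$, $\overline{A}=\{x\in\beta\mathbb{N}: A\in x\}$. $P$ is the set of primes, $L_0=\{1\}$, $L_n=\{a_1\cdots a_n: a_1,\dots,a_n\in P\}$. An element $p\in\beta\mathbb{N}$ is irreducible in $\beta\mathbb{N}$ if it cannot be written as $p=xy$ with $x,y\in\beta\mathbb{N}\setminus\{1\}$. *)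

From mathcomp Require Import all_boot.
Set Implicit Arguments. Unset Strict Implicit. Unset Printing Implicit Defensive.

(* Subsets of N = {1,2,...} are represented as predicates on nat; an
   element of beta N is an ultrafilter on nat that contains the set of
   positive naturals (so it is concentrated on N = {1,2,...}). *)
Definition uf := (nat -> Prop) -> Prop.

Definition is_ultra (U : uf) : Prop :=
  [/\ U (fun n => 0 < n),
      ~ U (fun _ => False),
      (forall A B : nat -> Prop, U A -> (forall n, A n -> B n) -> U B),
      (forall A B : nat -> Prop, U A -> U B -> U (fun n => A n /\ B n))
    & (forall A : nat -> Prop, U A \/ U (fun n => ~ A n))].

(* principal ultrafilter of k (naturals identified with principal ultrafilters) *)
Definition principal (k : nat) : uf := fun A => A k.
Definition uf1 : uf := principal 1.

Definition sdiv (A : nat -> Prop) (n : nat) : nat -> Prop := fun m => A (m * n).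

Definition ufmul (x y : uf) : uf := fun A => x (fun n => y (sdiv A n)).

Definition in_closure (A : nat -> Prop) (x : uf) : Prop := x A.

Definition L (n : nat) : nat -> Prop :=
  fun m => exists s : seq nat, [/\ size s = n, all prime s & m = \prod_(a <- s) a].

Definition irreducible_uf (p : uf) : Prop :=
  forall x y : uf, is_ultra x -> is_ultra y -> x <> uf1 -> y <> uf1 -> p <> ufmul x y.

(* finite product p * q1 * ... * qk (multiplication on beta N is associative) *)
Definition ufprod (p : uf) (qs : seq uf) : uf := foldl ufmul p qs.

Fixpoint all_prop (P : uf -> Prop) (s : seq uf) : Prop :=
  if s is q :: s' then P q /\ all_prop P s' else True.

(** The number [Omega m] of prime factors of [m], counted with multiplicity,
    is additive, and [L k] is exactly the set of [m > 0] with [Omega m = k].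
    Hence if [y z] contains [L i], then [y] contains [L j] and [z] contains
    [L (i - j)] for some [j <= i]: an ultrafilter concentrated on the finitely
    many sets [{n | Omega n = j}], [j <= i], contains one of them.  Since the
    only ultrafilter containing [L 0 = {1}] is [1], both factors of a
    nontrivial factorisation of an element of [cl(L i)] lie in some
    [cl(L j)] with [0 < j < i], and strong induction on [i] concludes. *)

From mathcomp Require Import all_boot.
From mathcomp Require Import zify.
From Stdlib Require Import Classical FunctionalExtensionality PropExtensionality.

Set Implicit Arguments.
Unset Strict Implicit.
Unset Printing Implicit Defensive.

Definition Omega (m : nat) : nat := \sum_(p < m.+1) logn p m.

Lemma Omega_widen m N : 0 < m -> m < N -> \sum_(p < N) logn p m = Omega m.
Proof.
move=> m_gt0 lt_mN; rewrite /Omega (big_ord_widen N (logn^~ m) lt_mN).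
rewrite [RHS]big_mkcond; apply: eq_bigr => p _.
by case: ifP => // /negbT; rewrite -leqNgt => /ltn_log0.
Qed.

Lemma OmegaM m n : 0 < m -> 0 < n -> Omega (m * n) = Omega m + Omega n.
Proof.
move=> m_gt0 n_gt0; rewrite {1}/Omega.
under eq_bigr => p _ do rewrite lognM //.
by rewrite big_split /= !Omega_widen //; nia.
Qed.

Lemma Omega1 : Omega 1 = 0.
Proof. by rewrite /Omega big1 // => p _; rewrite logn1. Qed.

Lemma Omega_prime p : prime p -> Omega p = 1.
Proof.
move=> p_pr; rewrite /Omega big_ord_recr /= logn_prime // eqxx big1 // => q _.
by rewrite logn_prime // ltn_eqF.
Qed.

Lemma L_Omega k m : L k m <-> 0 < m /\ Omega m = k.
Proof.
split.
  case=> s [<- s_pr ->]; elim: s s_pr => [|a s IHs] /=.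
    by rewrite big_nil Omega1.
  case/andP=> a_pr /IHs [s_gt0 Omega_s].
  have a_gt0 := prime_gt0 a_pr.
  by rewrite big_cons muln_gt0 a_gt0 s_gt0 OmegaM // Omega_prime // Omega_s.
elim/ltn_ind: m k => m IHm k [m_gt0 Omega_m].
have [m_le1 | m_gt1] := leqP m 1.
  have m_eq1 : m = 1 by lia.
  by move: Omega_m; rewrite m_eq1 Omega1 => <-; exists [::]; rewrite big_nil.
pose p := pdiv m; have p_pr : prime p := pdiv_prime m_gt1.
have p_gt0 := prime_gt0 p_pr.
have def_m : m = p * (m %/ p) by rewrite mulnC divnK // pdiv_dvd.
have q_gt0 : 0 < m %/ p by rewrite divn_gt0 // dvdn_leq // pdiv_dvd.
have Omega_pq : Omega m = (Omega (m %/ p)).+1.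
  by rewrite {1}def_m OmegaM // Omega_prime.
have [|s [size_s s_pr def_q]] := IHm _ (ltn_Pdiv (prime_gt1 p_pr) m_gt0) k.-1.
  by split => //; lia.
exists (p :: s); split; rewrite /= ?p_pr ?big_cons -?def_q //; lia.
Qed.

Lemma L0_eq1 n : L 0 n -> n = 1.
Proof. by case=> s [/size0nil -> _ ->]; rewrite big_nil. Qed.

Section Ultrafilter.

Variable y : uf.
Hypothesis y_ultra : is_ultra y.

Lemma uf_sub (A B : nat -> Prop) : y A -> (forall n, A n -> B n) -> y B.
Proof. by case: y_ultra => _ _ + _ _; apply. Qed.

Lemma uf_meet (A B : nat -> Prop) : y A -> y B -> y (fun n => A n /\ B n).
Proof. by case: y_ultra => _ _ _ + _; apply. Qed.

Lemma uf_nonempty (A : nat -> Prop) : y A -> exists n, A n.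
Proof.
move=> yA; apply: NNPP => A0.
have y_False : y (fun _ => False) by apply: (uf_sub yA) => n An; apply: A0; exists n.
by case: y_ultra => _ + _ _ _; apply.
Qed.

Lemma uf_pigeonhole (f : nat -> nat) i :
  y (fun n => f n <= i) -> exists2 j, j <= i & y (fun n => f n = j).
Proof.
elim: i => [|i IHi] y_le.
  by exists 0 => //; apply: (uf_sub y_le) => n; lia.
case: (y_ultra) => _ _ _ _ /(_ (fun n => f n = i.+1))[y_eq | y_neq].
  by exists i.+1.
have [|j le_ji y_eq] := IHi.
  by apply: (uf_sub (uf_meet y_le y_neq)) => n; lia.
by exists j => //; apply: leqW.
Qed.

Lemma uf_principal k : y (fun n => n = k) -> y = principal k.
Proof.
move=> y_k; apply: functional_extensionality => A.
apply: propositional_extensionality; split => [yA | Ak].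
  by have [n [-> ?]] := uf_nonempty (uf_meet y_k yA).
by apply: (uf_sub y_k) => n ->.
Qed.

End Ultrafilter.

Lemma uf_L0 y : is_ultra y -> y (L 0) -> y = uf1.
Proof.
by move=> y_ultra y_L0; apply: (uf_principal y_ultra); apply: (uf_sub y_ultra y_L0 L0_eq1).
Qed.

Lemma L_mul i m n : L i (m * n) -> [/\ 0 < m, 0 < n & Omega m + Omega n = i].
Proof. by case/L_Omega; rewrite muln_gt0 => /andP[m_gt0 n_gt0]; rewrite OmegaM. Qed.

Lemma ufmul_L_split y z i : is_ultra y -> is_ultra z -> ufmul y z (L i) ->
  exists2 j, j <= i & y (L j) /\ z (L (i - j)).
Proof.
move=> y_ultra z_ultra yz_L.
have y_le : y (fun n => Omega n <= i).
  apply: (uf_sub y_ultra yz_L) => n /(uf_nonempty z_ultra)[m].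
  by case/L_mul => _ _; lia.
have [j le_ji y_eq] := uf_pigeonhole y_ultra y_le.
have y_Lj := uf_meet y_ultra yz_L y_eq.
exists j => //; split.
  apply: (uf_sub y_ultra y_Lj) => n [/(uf_nonempty z_ultra)[m]].
  by case/L_mul => _ n_gt0 _ Omega_n; apply/L_Omega.
have [n [z_Ln Omega_n]] := uf_nonempty y_ultra y_Lj.
apply: (uf_sub z_ultra z_Ln) => m /L_mul[m_gt0 _ Omega_mn].
by apply/L_Omega; split => //; lia.
Qed.

Lemma uf_L_gt0 y k : is_ultra y -> y <> uf1 -> y (L k) -> 0 < k.
Proof. by move=> y_ultra y_neq1; case: k => // /(uf_L0 y_ultra)/y_neq1. Qed.

Lemma ufmulA (x y z : uf) : ufmul x (ufmul y z) = ufmul (ufmul x y) z.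
Proof.
apply: functional_extensionality => A; congr x.
apply: functional_extensionality => n; congr y.
apply: functional_extensionality => m; congr z.
by apply: functional_extensionality => k; rewrite /sdiv mulnA.
Qed.

Lemma ufmul_ufprod x p qs : ufmul x (ufprod p qs) = ufprod (ufmul x p) qs.
Proof. by elim: qs p => [|q qs IHqs] p //=; rewrite IHqs ufmulA. Qed.

Lemma ufprod_mul p qs p' qs' :
  ufmul (ufprod p qs) (ufprod p' qs') = ufprod p (qs ++ p' :: qs').
Proof. by rewrite ufmul_ufprod /ufprod foldl_cat. Qed.

Lemma all_prop_cat P s t : all_prop P s -> all_prop P t -> all_prop P (s ++ t).
Proof. by elim: s => //= q s IHs [Pq Ps] Pt; split; last exact: IHs. Qed.

Definition irreducible_ultra (q : uf) : Prop := is_ultra q /\ irreducible_uf q.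

Lemma L_irreducible_factorization i x : is_ultra x -> 0 < i -> x (L i) ->
  exists p qs, [/\ irreducible_ultra p, all_prop irreducible_ultra qs & x = ufprod p qs].
Proof.
elim/ltn_ind: i x => i IHi x x_ultra i_gt0 x_L.
have [x_irr | x_red] := classic (irreducible_uf x); first by exists x, [::].
have [y [z [y_ultra z_ultra y_neq1 z_neq1 def_x]]] :
    exists y z, [/\ is_ultra y, is_ultra z, y <> uf1, z <> uf1 & x = ufmul y z].
  apply: NNPP => no_factors; apply: x_red => y z y_ultra z_ultra y_neq1 z_neq1 def_x.
  by apply: no_factors; exists y, z.
move: x_L; rewrite def_x => /(ufmul_L_split y_ultra z_ultra)[j le_ji [y_L z_L]].
have j_gt0 := uf_L_gt0 y_ultra y_neq1 y_L.
have ij_gt0 := uf_L_gt0 z_ultra z_neq1 z_L.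
have [|p [qs [p_irr qs_irr ->]]] := IHi j _ y y_ultra j_gt0 y_L; first lia.
have [|p' [qs' [p'_irr qs'_irr ->]]] := IHi (i - j) _ z z_ultra ij_gt0 z_L; first lia.
exists p, (qs ++ p' :: qs'); split; rewrite ?ufprod_mul //.
exact: all_prop_cat.
Qed.

Theorem theorem2p10 (x : uf) (i : nat) :
  is_ultra x -> 1 <= i -> in_closure (L i) x ->
  irreducible_uf x \/
  (exists (p : uf) (qs : seq uf),
      [/\ 1 <= size qs,
          is_ultra p /\ irreducible_uf p,
          all_prop (fun q => is_ultra q /\ irreducible_uf q) qs
        & x = ufprod p qs]).
Proof.
move=> x_ultra i_gt0 x_L.
have [p [[|q qs] [p_irr qs_irr ->]]] := L_irreducible_factorization x_ultra i_gt0 x_L.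
  by left; case: p_irr.
by right; exists p, (q :: qs).
Qed.
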